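(* For every $m\ge2$, $\mathbf{E}_m=\bigvee_{r\ge1}\mathbf{M}(\mathbf{w}_{m,r})$, where $\mathbf{w}_{m,r}=x^{m-1}t_1x^{m-1}t_2x^{m-1}\cdots t_rx^{m-1}$.
   Context: All varieties are varieties of monoids (signature: associative binary operation and identity constant $1$); identities are pairs of words over a countably infinite set of variables, and variables may be substituted by $1$. $\mathbf{O}$ is the variety defined by $xyt_1xt_2y \approx yxt_1xt_2y$, $xt_1xyt_2y \approx xt_1yxt_2y$, $xt_1yt_2xy \approx xt_1yt_2yx$. For $m\ge1$, $\mathbf{E}_m$ is the subvariety of $\mathbf{O}$ defined additionally by $x^{m+1}\approx x^m$ and $x^mt\approx tx^m$. For a word $\mathbf{w}$, the factor monoid $M(\mathbf{w})$ consists of all factors (contiguous subwords, including the empty word $1$) of $\mathbf{w}$ together with a zero $0$, with product $\mathbf{u}\cdot\mathbf{v}=\mathbf{u}\mathbf{v}$ if $\mathbf{u}\mathbf{v}$ is a factor of $\mathbf{w}$ and $0$ otherwise; $\mathbf{M}(\mathbf{w})$ is the monoid variety generated by $M(\mathbf{w})$. The join $\bigvee$ is taken in the lattice of monoid varieties (the variety generated by the union). Here $x,t_1,\dots,t_r$ are distinct variables. *)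

From mathcomp Require Import all_boot.
Set Implicit Arguments. Unset Strict Implicit. Unset Printing Implicit Defensive.

Definition word := seq nat.
Definition identity := (word * word)%type.

Record magma := Magma { carrier : Type; mul : carrier -> carrier -> carrier; one : carrier }.

Definition is_monoid (M : magma) : Prop :=
  (forall a b c : carrier M, mul a (mul b c) = mul (mul a b) c) /\
  (forall a : carrier M, mul (one M) a = a) /\
  (forall a : carrier M, mul a (one M) = a).

(** Value of a word under an assignment of variables (the empty word gives 1;
    assigning 1 to a variable is allowed). *)
Fixpoint eval (M : magma) (s : nat -> carrier M) (u : word) : carrier M :=
  match u with
  | [::] => one M
  | x :: u' => mul (s x) (eval s u')
  end.

Definition sat (M : magma) (i : identity) : Prop :=
  forall s : nat -> carrier M, eval s i.1 = eval s i.2.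

Definition var_of (Sigma : identity -> Prop) (M : magma) : Prop :=
  is_monoid M /\ forall i, Sigma i -> sat M i.

(** The join of the varieties generated by a family [F i] (i with [P i]):
    the variety generated by the union, i.e. (Birkhoff) the class of monoids
    satisfying every identity that holds in all [F i]. *)
Definition join_var (I : Type) (P : I -> Prop) (F : I -> magma) (M : magma) : Prop :=
  is_monoid M /\
  forall i : identity, (forall j, P j -> sat (F j) i) -> sat M i.

(** Factor monoid M(w): factors of w together with a zero (None). *)
Definition isfac (w : word) (o : option word) : bool :=
  if o is Some u then infix u w else true.

Definition fac_carrier (w : word) := {o : option word | isfac w o}.

Definition fmul (w : word) (o1 o2 : option word) : option word :=
  match o1, o2 with
  | Some u, Some v => if infix (u ++ v) w then Some (u ++ v) else None
  | _, _ => None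
  end.

Lemma fmul_fac (w : word) o1 o2 : isfac w (fmul w o1 o2).
Proof.
case: o1 => [u|] //; case: o2 => [v|] //=.
by case H: (infix (u ++ v) w) => //=; rewrite H.
Qed.

Lemma one_fac (w : word) : isfac w (Some [::]).
Proof. by rewrite /= infix0s. Qed.

Definition fac_mul (w : word) (a b : fac_carrier w) : fac_carrier w :=
  exist _ (fmul w (sval a) (sval b)) (fmul_fac w (sval a) (sval b)).

Definition fac_one (w : word) : fac_carrier w := exist _ (Some [::]) (one_fac w).

Definition factor_monoid (w : word) : magma :=
  @Magma (fac_carrier w) (@fac_mul w) (fac_one w).

(** Variables: x = 0, y = 1, t = 2, t1 = 3, t2 = 4. *)
Definition O_ids (i : identity) : Prop :=
  i = ([:: 0; 1; 3; 0; 4; 1], [:: 1; 0; 3; 0; 4; 1]) \/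
  i = ([:: 0; 3; 0; 1; 4; 1], [:: 0; 3; 1; 0; 4; 1]) \/
  i = ([:: 0; 3; 1; 4; 0; 1], [:: 0; 3; 1; 4; 1; 0]).

Definition E_ids (m : nat) (i : identity) : Prop :=
  O_ids i \/
  i = (nseq m.+1 0, nseq m 0) \/
  i = (nseq m 0 ++ [:: 2], 2 :: nseq m 0).

Definition E_var (m : nat) : magma -> Prop := var_of (E_ids m).

(** w_{m,r} = x^{m-1} t_1 x^{m-1} t_2 ... t_r x^{m-1}, with x = 0, t_i = i. *)
Definition w_mr (m r : nat) : word :=
  nseq (m - 1) 0 ++ flatten [seq i :: nseq (m - 1) 0 | i <- iota 1 r].

(* Call a letter linear in u if it occurs exactly once, and let trace_z u be the subword of
   u formed by z and the linear letters. In O a word is determined by its traces at its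
   non-linear letters: adjacent occurrences of two non-linear letters can be swapped by one of
   the three defining identities. In E_m, if trace_z u contains z^m, then z^m is central and
   absorbs all other occurrences of z, so these letters can be collected in front. For every
   other non-linear z, trace_z u = z^k0 a1 z^k1 ... ap z^kp with all ki < m, and the substitution
   z -> x, ai -> x^(m-1-k(i-1)) ti maps it onto a prefix of w_{m,p+1}; it is injective on words
   over z and the linear letters, so an identity of M(w_{m,p+1}) forces trace_z v = trace_z u.
   Conversely, w_{m,r} contains no m-th power of a nonempty word and no repeated letter but x,
   which makes the identities of E_m hold in every M(w_{m,r}). *)

From mathcomp Require Import all_boot zify.
Set Implicit Arguments. Unset Strict Implicit. Unset Printing Implicit Defensive.

Lemma count_mem_gt0 (x : nat) (u : word) : (0 < count_mem x u) = (x \in u).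
Proof. by rewrite -has_count has_pred1. Qed.

Section Evaluation.
Variables (M : magma) (s : nat -> carrier M).
Hypothesis monoidM : is_monoid M.

Lemma eval_cat (a b : word) : eval s (a ++ b) = mul (eval s a) (eval s b).
Proof.
case: monoidM => [mulA [mul1 _]]; elim: a => [|c a IH] /=; first by rewrite mul1.
by rewrite IH mulA.
Qed.

Lemma eval_flatten (th : nat -> word) (u : word) :
  eval s (flatten (map th u)) = eval (fun c => eval s (th c)) u.
Proof. by elim: u => [|c u IH] //=; rewrite eval_cat IH. Qed.

Lemma eval_subst_in_context (L R : word) (th : nat -> word) (A D : word) :
  sat M (L, R) ->
  eval s (A ++ flatten (map th L) ++ D) = eval s (A ++ flatten (map th R) ++ D).
Proof. by move=> LR; rewrite !eval_cat !eval_flatten (LR (fun c => eval s (th c))). Qed.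

Lemma eval_nseq (s' : nat -> carrier M) (x y k : nat) :
  s x = s' y -> eval s (nseq k x) = eval s' (nseq k y).
Proof. by move=> sxy; elim: k => //= k ->; rewrite sxy. Qed.

End Evaluation.

Definition trace (l : pred nat) (z : nat) : word -> word := filter (predU (pred1 z) l).

Lemma count_mem_filter (p : pred nat) (c : nat) (u : word) :
  p c -> count_mem c (filter p u) = count_mem c u.
Proof. by move=> pc; rewrite count_filter; apply: eq_count => d /=; case: eqP => // ->. Qed.

Lemma count_mem_trace (l : pred nat) (z : nat) (u : word) :
  count_mem z (trace l z u) = count_mem z u.
Proof. by rewrite count_mem_filter //= eqxx. Qed.

Lemma count_mem_eq_of_traces (l : pred nat) (u v : word) :
  (forall z, trace l z u = trace l z v) -> forall z, count_mem z u = count_mem z v.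
Proof. by move=> tr_uv z; rewrite -(count_mem_trace l) tr_uv count_mem_trace. Qed.

Lemma trace_notin (l : pred nat) (z : nat) (x : word) :
  z \notin x -> trace l z x = filter l x.
Proof. by move=> zx; apply: eq_in_filter => c cx /=; case: eqP => // cz; rewrite -cz cx in zx. Qed.

Lemma eq_trace (l1 l2 : pred nat) (z : nat) (x : word) : l1 =1 l2 -> trace l1 z x = trace l2 z x.
Proof. by move=> l12; apply: eq_filter => c /=; rewrite l12. Qed.

Lemma trace_linear (l : pred nat) (z : nat) (x : word) : l z -> trace l z x = filter l x.
Proof. by move=> lz; apply: eq_filter => c /=; case: eqP => // ->. Qed.

Lemma trace_filter_notin (l : pred nat) (Cs : seq nat) (z : nat) (x : word) :
  {in Cs, forall c, ~~ l c} ->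
  trace l z [seq c <- x | c \notin Cs] = if z \in Cs then filter l x else trace l z x.
Proof.
move=> nlC; rewrite /trace -filter_predI; case: ifP => zC; apply: eq_filter => c /=.
all: have [cC|cC] := boolP (c \in Cs); rewrite /= ?andbT ?andbF //.
- by rewrite (negbTE (nlC c cC)).
- by case: eqP => // cz; rewrite cz zC in cC.
- by rewrite (negbTE (nlC c cC)) orbF; case: eqP => // cz; rewrite cz zC in cC.
Qed.

Lemma filter_pred1E (z : nat) (u : word) : filter (pred1 z) u = nseq (count_mem z u) z.
Proof. by elim: u => //= c u ->; case: eqP => [->|]. Qed.

Lemma trace_nonlinear (l : pred nat) (z : nat) (u : word) :
  {in u, forall c, ~~ l c} -> trace l z u = nseq (count_mem z u) z.
Proof.
move=> nl; rewrite -filter_pred1E; apply: eq_in_filter => c cu /=.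
by rewrite (negbTE (nl c cu)) orbF.
Qed.

Lemma trace_filter_predC1 (l : pred nat) (z z' : nat) (u : word) :
  ~~ l z -> z' != z -> trace l z' (filter (predC1 z) u) = trace l z' u.
Proof.
move=> lz zz'; rewrite /trace -filter_predI; apply: eq_filter => c /=.
by case: (eqVneq c z) => [->|_]; rewrite /= ?andbT ?andbF // eq_sym (negbTE zz') (negbTE lz).
Qed.

Lemma split_first (p : pred nat) (v : word) : has p v ->
  exists v1 d v2, [/\ v = v1 ++ d :: v2, ~~ has p v1 & p d].
Proof.
elim: v => [//|e v IH] /=; case pe: (p e) => /= pv; first by exists [::], e, v.
by have [v1 [d [v2 [-> nv1 pd]]]] := IH pv; exists (e :: v1), d, v2; rewrite /= pe.
Qed.

Lemma trace_cons_split (l : pred nat) (c : nat) (u v : word) :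
  (forall z, trace l z (c :: u) = trace l z v) ->
  exists v1 v2, [/\ v = v1 ++ c :: v2, forall z, trace l z u = trace l z (v1 ++ v2),
                    {in v1, forall d, ~~ l d} & l c -> v1 = [::]].
Proof.
move=> tr_uv; have := tr_uv c; rewrite {1}/trace /= eqxx /= => tr_c.
have /split_first [v1 [d [v2 [Ev nv1 /= pd]]]] : has (predU (pred1 c) l) v.
  by rewrite has_filter -[filter _ v]/(trace l c v) -tr_c.
have tr_v1 : filter (predU (pred1 c) l) v1 = [::] by apply/eqP; rewrite -[_ == _]negbK -has_filter.
move: tr_c; rewrite Ev /trace filter_cat tr_v1 /= pd => -[dc tr_c]; subst d.
have nl1 : {in v1, forall d, ~~ l d}.
  by move=> d dv1; apply: contra (hasPn nv1 d dv1) => ld /=; rewrite ld orbT.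
have lin1 : l c -> v1 = [::].
  case: v1 Ev nv1 {tr_v1 nl1} => [//|d v1] Ev nv1 lc; have := tr_uv d.
  by rewrite Ev /trace /= !eqxx lc orbT /= => -[cd]; move: nv1; rewrite -cd /= eqxx.
exists v1, v2; split=> // z; have := tr_uv z; rewrite Ev /trace !filter_cat /=.
have [-> _|zc] := eqVneq z c; first by rewrite tr_v1.
by case: (boolP (l c)) => [/lin1 -> /= [] | _ /= ->].
Qed.

Section OVariety.
Variables (M : magma) (s : nat -> carrier M).
Hypothesis OM : var_of O_ids M.

Let monoidM : is_monoid M. Proof. by case: OM. Qed.

Let subst_xy (x y : nat) (A B : word) (c : nat) : word :=
  if c == 0 then [:: x] else if c == 1 then [:: y] else if c == 3 then A else B.

Let eval_O_instance (L R : word) (x y : nat) (A B P Q : word) : O_ids (L, R) ->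
  eval s (P ++ flatten (map (subst_xy x y A B) L) ++ Q) =
  eval s (P ++ flatten (map (subst_xy x y A B) R) ++ Q).
Proof. by case: OM => _ satO /satO; apply: eval_subst_in_context. Qed.

Lemma eval_swap_late (x y : nat) (A B P Q : word) :
  eval s (P ++ x :: A ++ y :: B ++ x :: y :: Q) = eval s (P ++ x :: A ++ y :: B ++ y :: x :: Q).
Proof.
have := @eval_O_instance _ _ x y A B P Q (or_intror (or_intror erefl)).
by rewrite /subst_xy /= -!catA /= -!catA.
Qed.

Lemma eval_swap_middle (x y : nat) (A B P Q : word) :
  eval s (P ++ x :: A ++ x :: y :: B ++ y :: Q) = eval s (P ++ x :: A ++ y :: x :: B ++ y :: Q).
Proof.
have := @eval_O_instance _ _ x y A B P Q (or_intror (or_introl erefl)).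
by rewrite /subst_xy /= -!catA /= -!catA.
Qed.

Lemma eval_swap_early (x y : nat) (A B P Q : word) :
  eval s (P ++ x :: y :: A ++ x :: B ++ y :: Q) = eval s (P ++ y :: x :: A ++ x :: B ++ y :: Q).
Proof.
have := @eval_O_instance _ _ x y A B P Q (or_introl erefl).
by rewrite /subst_xy /= -!catA /= -!catA.
Qed.

Lemma eval_swap (x y : nat) (P Q : word) :
  1 < count_mem x (P ++ x :: y :: Q) -> 1 < count_mem y (P ++ x :: y :: Q) ->
  eval s (P ++ x :: y :: Q) = eval s (P ++ y :: x :: Q).
Proof.
have [-> //|nxy] := eqVneq x y.
rewrite !count_cat /= !eqxx (negbTE nxy) eq_sym (negbTE nxy) /= => cx cy.
have : x \in P ++ Q by rewrite -count_mem_gt0 count_cat /=; lia.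
have : y \in P ++ Q by rewrite -count_mem_gt0 count_cat /=; lia.
rewrite !mem_cat => /orP [yP|yQ] /orP [xP|xQ].
- case/splitPr: xP yP => A B; rewrite mem_cat inE eq_sym (negbTE nxy) /=.
  case/orP=> [/splitPr [A1 A2]|/splitPr [B1 B2]]; rewrite -!catA /= -?catA /=.
    by rewrite eval_swap_late.
  exact: eval_swap_late.
- case/splitPr: yP => A B; case/splitPr: xQ => C D; rewrite -!catA /=.
  by rewrite eval_swap_middle.
- case/splitPr: xP => A B; case/splitPr: yQ => C D; rewrite -!catA /=.
  exact: eval_swap_middle.
- case/splitPr: xQ yQ => C D; rewrite mem_cat inE eq_sym (negbTE nxy) /=.
  case/orP=> [/splitPr [C1 C2]|/splitPr [D1 D2]]; rewrite -?catA /= -?catA /=.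
    by rewrite eval_swap_early.
  exact: eval_swap_early.
Qed.

Lemma eval_move_left (c : nat) (v1 P R : word) :
  (forall d, d \in c :: v1 -> 1 < count_mem d (P ++ v1 ++ c :: R)) ->
  eval s (P ++ v1 ++ c :: R) = eval s (P ++ c :: v1 ++ R).
Proof.
elim: v1 P => [//|d v1 IH] P cnt /=.
have cnt_d := cnt d; have cnt_c := cnt c.
rewrite -cat_rcons IH; last first.
  by move=> e; rewrite cat_rcons !inE => /orP [|] e_in; apply: cnt; rewrite !inE e_in ?orbT.
rewrite cat_rcons eval_swap //.
- by move: cnt_d; rewrite !inE eqxx orbT /= !count_cat /= !count_cat /= => /(_ isT); lia.
- by move: cnt_c; rewrite !inE eqxx /= !count_cat /= !count_cat /= => /(_ isT); lia.
Qed.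

Lemma eval_eq_of_traces (l : pred nat) (u v P Q : word) :
  (forall z, trace l z u = trace l z v) ->
  {in u, forall c, ~~ l c -> 1 < count_mem c (P ++ u ++ Q)} ->
  eval s (P ++ u ++ Q) = eval s (P ++ v ++ Q).
Proof.
elim: u v P => [|c u IH] v P tr_uv cnt.
  by case: v tr_uv => [//|d v] /(_ d); rewrite /trace /= eqxx.
have [v1 [v2 [Ev tr_u lin_v1 lin_c]]] := trace_cons_split tr_uv.
have cnt_uv := count_mem_eq_of_traces tr_uv.
have Ev' : P ++ v ++ Q = P ++ v1 ++ c :: v2 ++ Q by rewrite Ev -catA.
have -> : eval s (P ++ v ++ Q) = eval s (P ++ c :: v1 ++ v2 ++ Q).
  rewrite Ev'; case: (boolP (l c)) => [/lin_c -> //|nlc].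
  apply: eval_move_left => d d_in; rewrite -Ev' !count_cat -cnt_uv -!count_cat.
  have [->|dv1] : d = c \/ d \in v1 by move: d_in; rewrite inE => /orP [/eqP|]; auto.
    exact: cnt (mem_head _ _) nlc.
  apply: cnt (lin_v1 d dv1).
  by rewrite -count_mem_gt0 cnt_uv count_mem_gt0 Ev mem_cat dv1.
have shift (X : word) : P ++ c :: X ++ Q = (P ++ [:: c]) ++ X ++ Q by rewrite -catA.
rewrite cat_cons (catA v1) !shift.
apply: IH => // d du nld; rewrite -catA; apply: cnt nld; exact: mem_behead.
Qed.

End OVariety.

Lemma filter_eq_cat_inv (p : pred nat) (u A B : word) : filter p u = A ++ B ->
  exists u1 u2, [/\ u = u1 ++ u2, filter p u1 = A & filter p u2 = B].
Proof.
elim: u A => [|c u IH] A /=.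
  by case: A => [|//]; case: B => [|//] _; exists [::], [::].
case pc: (p c) => fu; last first.
  by have [u1 [u2 [-> f1 f2]]] := IH _ fu; exists (c :: u1), u2; rewrite /= pc.
case: A fu => [|a A] /= fu; first by exists [::], (c :: u); rewrite /= pc.
case: fu => <- /IH [u1 [u2 [-> f1 f2]]].
by exists (c :: u1), u2; rewrite /= pc f1.
Qed.

Lemma infix_filter_inv (p : pred nat) (X u : word) : infix X (filter p u) ->
  exists U1 S U2, u = U1 ++ S ++ U2 /\ filter p S = X.
Proof.
case/infixP=> [A [B /filter_eq_cat_inv [U1 [u' [-> _ /filter_eq_cat_inv]]]]].
by case=> [S [U2 [-> fS _]]]; exists U1, S, U2.
Qed.

Definition capped (m : nat) (l : pred nat) (u : word) (z : nat) : bool :=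
  ~~ l z && infix (nseq m z) (trace l z u).

Lemma E_var_O (m : nat) (M : magma) : E_var m M -> var_of O_ids M.
Proof. by case=> monoidM satE; split=> // i Oi; apply: satE; left. Qed.

Section EVariety.
Variables (m : nat) (M : magma) (s : nat -> carrier M).
Hypothesis EM : E_var m M.

Let monoidM : is_monoid M. Proof. by case: EM. Qed.

Lemma eval_pow_succ (z : nat) : eval s (nseq m.+1 z) = eval s (nseq m z).
Proof.
case: EM => _ /(_ _ (or_intror (or_introl erefl)) (fun _ => s z)) /=.
by rewrite !(eval_nseq (s' := s) (x := 0) (y := z)).
Qed.

Lemma eval_pow_central (z : nat) (a : carrier M) :
  mul (eval s (nseq m z)) a = mul a (eval s (nseq m z)).
Proof.
pose s' c := if c == 2 then a else s z.
case: EM => _ /(_ _ (or_intror (or_intror erefl)) s') /=.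
rewrite eval_cat //= !(eval_nseq (s' := s) (x := 0) (y := z)) //.
by case: monoidM => _ [_ mul1]; rewrite !mul1.
Qed.

Lemma eval_pow_front (z : nat) (A B : word) :
  eval s (A ++ nseq m z ++ B) = eval s (nseq m z ++ A ++ B).
Proof.
case: (monoidM) => mulA _.
by rewrite !eval_cat // mulA -eval_pow_central -mulA.
Qed.

Lemma eval_pow_absorb (z : nat) (X : word) :
  eval s (nseq m z ++ X) = eval s (nseq m z ++ filter (predC1 z) X).
Proof.
elim: X => [//|c X IH] /=; have [->|nz] /= := eqVneq c z.
  have -> : nseq m z ++ z :: X = nseq m.+1 z ++ X by rewrite -addn1 nseqD -catA.
  by rewrite eval_cat // eval_pow_succ -eval_cat.
have cons_out (Y : word) : eval s (nseq m z ++ c :: Y) = mul (s c) (eval s (nseq m z ++ Y)).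
  by rewrite -[c :: Y]cat1s -eval_pow_front.
by rewrite !cons_out IH.
Qed.

Lemma eval_capped_step (l : pred nat) (u : word) (z : nat) (P : word) :
  capped m l u z -> {in u, forall c, ~~ l c -> 1 < count_mem c u} ->
  eval s (P ++ u) = eval s (P ++ nseq m z ++ filter (predC1 z) u).
Proof.
case/andP=> lz /infix_filter_inv [U1 [S [U2 [Eu fS]]]] cnt.
have nlS : {in S, forall c, ~~ l c}.
  move=> c cS; apply: contra lz => lc.
  have : c \in nseq m z by rewrite -fS mem_filter /= lc orbT cS.
  by case/nseqP=> <-.
have cntS : count_mem z S = m.
  by rewrite -(count_mem_trace l) [trace _ _ _]fS count_nseq /= eqxx mul1n.
pose S' := nseq m z ++ filter (predC1 z) S.
have pS : perm_eq S' S by rewrite /S' -cntS -filter_pred1E perm_filterC.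
have trS z' : trace l z' S = trace l z' S'.
  rewrite !trace_nonlinear //; last by move=> c; rewrite (perm_mem pS); apply: nlS.
  by move/permP: pS => ->.
transitivity (eval s ((P ++ U1) ++ S' ++ U2)).
  rewrite Eu catA; apply: (eval_eq_of_traces s (E_var_O EM)) => // c cS lc.
  have /cnt/(_ lc) : c \in u by rewrite Eu !mem_cat cS orbT.
  by rewrite Eu !count_cat; lia.
rewrite /S' -(catA (nseq m z)) [LHS]eval_pow_front [RHS]eval_pow_front.
rewrite [LHS]eval_pow_absorb [RHS]eval_pow_absorb Eu.
by rewrite !filter_cat !filter_id -!catA.
Qed.

Lemma eval_capped (l : pred nat) (Cs : seq nat) (P u : word) :
  uniq Cs -> {in Cs, forall z, capped m l u z} ->
  {in u, forall c, ~~ l c -> 1 < count_mem c u} ->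
  eval s (P ++ u) = eval s (P ++ flatten [seq nseq m z | z <- Cs] ++ [seq c <- u | c \notin Cs]).
Proof.
elim: Cs P u => [|z Cs IH] P u /=.
  by move=> _ _ _; rewrite (eq_filter (a2 := predT)) ?filter_predT.
case/andP=> zCs uCs capd cnt; have capz := capd z (mem_head _ _).
have /andP [lz _] := capz.
rewrite (eval_capped_step _ capz cnt) catA IH //.
- rewrite -!catA -filter_predI; congr (eval s (_ ++ _ ++ _ ++ _)).
  by apply: eq_filter => c /=; rewrite inE negb_or andbC.
- move=> z' z'Cs; have zz' : z' != z by apply: contraNneq zCs => <-.
  have /andP [lz' capz'] : capped m l u z' by apply: capd; rewrite inE z'Cs orbT.
  by rewrite /capped lz' trace_filter_predC1.
- move=> c; rewrite mem_filter => /andP [/= cz cu] lc.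
  by rewrite count_mem_filter //; apply: cnt.
Qed.

End EVariety.

Definition fac_word (w : word) (s : nat -> carrier (factor_monoid w)) (c : nat) : word :=
  odflt [::] (sval (s c)).

Lemma eval_factor_monoid (w : word) (s : nat -> carrier (factor_monoid w)) (u : word) :
  sval (eval s u) =
  if all (fun c => sval (s c) != None) u && infix (flatten (map (fac_word s) u)) w
  then Some (flatten (map (fac_word s) u)) else None.
Proof.
elim: u => [|c u IH] /=; first by rewrite infix0s.
rewrite IH /fac_word; case: (sval (s c)) => [a|] //=.
case: (all _ u) => //=; case: ifP => [//|not_fac].
by case: ifP => // /catl_infix; rewrite not_fac.
Qed.

Lemma sat_factor_monoid (w L R : word) : L =i R ->
  (forall th : nat -> word,
     infix (flatten (map th L)) w -> flatten (map th R) = flatten (map th L)) ->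
  (forall th : nat -> word,
     infix (flatten (map th R)) w -> flatten (map th L) = flatten (map th R)) ->
  sat (factor_monoid w) (L, R).
Proof.
move=> LR L_R R_L s /=; apply: val_inj; rewrite /= !eval_factor_monoid (eq_all_r LR).
case: (all _ R) => //=; case: ifP => [fL|nfL]; first by rewrite L_R // fL.
by case: ifP => // fR; move: nfL; rewrite R_L // fR.
Qed.

Lemma count_w_mr_le1 (m r c : nat) : c != 0 -> count_mem c (w_mr m r) <= 1.
Proof.
move=> c0; have cnt0 k : count_mem c (nseq k 0) = 0 by rewrite count_nseq /= eq_sym (negbTE c0).
have -> : count_mem c (w_mr m r) = count_mem c (iota 1 r).
  rewrite /w_mr count_cat cnt0 add0n; elim: (iota 1 r) => //= i t IH.
  by rewrite count_cat /= cnt0 IH.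
by rewrite count_uniq_mem ?iota_uniq // leq_b1.
Qed.

Lemma w_mrS (m r : nat) : w_mr m r.+1 = w_mr m r ++ r.+1 :: nseq (m - 1) 0.
Proof. by rewrite /w_mr -(addn1 r) iotaD map_cat flatten_cat /= cats0 catA addnC. Qed.

Lemma prefix_cat_notin (c : nat) (X A B : word) :
  c \notin X -> prefix X (A ++ c :: B) -> prefix X A.
Proof.
elim: X A => [|x X IH] [|a A] //= cX; first by case/andP=> /eqP xc; rewrite xc mem_head in cX.
by case/andP=> -> /IH -> //; apply: contra cX; rewrite inE => ->; rewrite orbT.
Qed.

Lemma infix_cat_notin (c : nat) (X A B : word) :
  c \notin X -> infix X (A ++ c :: B) -> infix X A || infix X B.
Proof.
move=> cX; elim: A => [|a A IH]; rewrite ?cat0s ?cat_cons infix_consl.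
  case/orP=> [/(prefix_cat_notin (A := [::]) cX)|->]; last by rewrite orbT.
  by rewrite prefixs0 => /eqP ->; rewrite infix0s.
case/orP=> [/(prefix_cat_notin (A := a :: A) cX)/prefixW -> //|/IH /orP [XA|->]].
  by rewrite infix_consl XA orbT.
by rewrite orbT.
Qed.

Lemma prefix_nseq (T : eqType) (x : T) (k n : nat) : k <= n -> prefix (nseq k x) (nseq n x).
Proof. by move=> kn; apply/prefixP; exists (nseq (n - k) x); rewrite -nseqD subnKC. Qed.

Lemma w_mr_no_run (m r : nat) : 0 < m -> ~~ infix (nseq m 0) (w_mr m r).
Proof.
move=> m0; elim: r => [|r IH].
  by rewrite /w_mr /= cats0; apply/negP => /size_infix; rewrite !size_nseq; lia.
rewrite w_mrS; apply/negP => /infix_cat_notin; rewrite mem_nseq /= andbF => /(_ isT).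
by rewrite (negbTE IH) /= => /size_infix; rewrite !size_nseq; lia.
Qed.

Lemma w_mr_no_power (m r : nat) (X : word) :
  1 < m -> X != [::] -> ~~ infix (flatten (nseq m X)) (w_mr m r).
Proof.
move=> m1 X0; apply/negP => Xw.
have [/all_pred1P EX|/allPn [c cX /= c0]] := boolP (all (pred1 0) X).
  have : infix (nseq m 0) (flatten (nseq m X)).
    have -> : flatten (nseq m X) = nseq (m * size X) 0.
      by rewrite EX size_nseq; elim: (m) => //= k ->; rewrite mulSn nseqD.
    by apply/prefixW/prefix_nseq; rewrite leq_pmulr // lt0n size_eq0.
  by move/infix_trans/(_ Xw); apply/negP/w_mr_no_run; lia.
have := leq_count_subseq (pred1 c) (infixW Xw); have := count_w_mr_le1 m r c0.
have : 0 < count_mem c X by rewrite count_mem_gt0.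
have -> : count_mem c (flatten (nseq m X)) = m * count_mem c X.
  by elim: (m) => //= k IH; rewrite count_cat IH mulSn.
by nia.
Qed.

Lemma w_mr_repeated_pow0 (m r : nat) (F X : word) : infix F (w_mr m r) ->
  (forall c, 2 * count_mem c X <= count_mem c F) -> X = nseq (size X) 0.
Proof.
move=> Fw cnt; apply/all_pred1P/allP => c cX /=; apply/contraT => c0.
have := count_w_mr_le1 m r c0; have := leq_count_subseq (pred1 c) (infixW Fw).
by have := cnt c; rewrite -count_mem_gt0 in cX; lia.
Qed.

(* Only x repeats in w_{m,r}, so the letters x, y occurring twice on each side are sent to
   powers of x. *)
Lemma sat_O_w_mr (m r : nat) (i : identity) : O_ids i -> sat (factor_monoid (w_mr m r)) i.
Proof.
case=> [->|[->|->]]; apply: sat_factor_monoid => [|th Fw|th Fw]; try exact: perm_mem;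
  (have [X0 X1] : th 0 = nseq (size (th 0)) 0 /\ th 1 = nseq (size (th 1)) 0 by
     split; apply: (w_mr_repeated_pow0 Fw) => c; rewrite /= !count_cat /=; lia);
  have XY : th 0 ++ th 1 = th 1 ++ th 0 by rewrite X0 X1 -!nseqD addnC.
all: have XY' (Z : word) : th 0 ++ th 1 ++ Z = th 1 ++ th 0 ++ Z by rewrite !catA XY.
all: by rewrite /= ?cats0 ?XY' ?XY.
Qed.

(* Unless x is sent to 1, both sides contain an m-th power and evaluate to 0. *)
Lemma sat_E_w_mr (m r : nat) (i : identity) :
  1 < m -> E_ids m i -> sat (factor_monoid (w_mr m r)) i.
Proof.
move=> m1; case=> [/sat_O_w_mr //|Ei].
have X0 (th : nat -> word) (Y : word) : infix Y (w_mr m r) ->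
    infix (flatten (nseq m (th 0))) Y -> th 0 = [::].
  by move=> Yw /infix_trans/(_ Yw); apply: contraTeq => X0; apply: w_mr_no_power.
have nil_pow k : flatten (nseq k ([::] : word)) = [::] by elim: k.
case: Ei => ->; apply: sat_factor_monoid => [c|th|th];
  rewrite ?map_cat ?flatten_cat ?map_nseq /= ?map_nseq; try move=> Fw.
- by rewrite inE !mem_nseq; case: m m1 {X0} => [|[|m]] //= _; case: eqP.
- by rewrite (X0 th _ Fw) ?nil_pow // suffix_infix.
- by rewrite (X0 th _ Fw) ?nil_pow ?infix_refl.
- by rewrite mem_cat !inE orbC.
- by rewrite (X0 th _ Fw) ?nil_pow ?cats0 // prefix_infix.
- by rewrite (X0 th _ Fw) ?nil_pow ?cats0 // suffix_infix.
Qed.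

Definition w_mr_from (m j n : nat) : word :=
  nseq (m - 1) 0 ++ flatten [seq i :: nseq (m - 1) 0 | i <- iota j n].

Lemma w_mr_fromS (m j n : nat) :
  w_mr_from m j n.+1 = nseq (m - 1) 0 ++ j :: w_mr_from m j.+1 n.
Proof. by []. Qed.

Lemma ltn_of_not_infix_nseq (m z k : nat) (F : word) : ~~ infix (nseq m z) (nseq k z ++ F) -> k < m.
Proof.
by apply: contraNT; rewrite -leqNgt => mk; apply/infix_catr/prefixW/prefix_nseq.
Qed.

Lemma cat_cancelr (T : Type) (s1 s2 t : seq T) : s1 ++ t = s2 ++ t -> s1 = s2.
Proof.
move=> E; have /eqP := congr1 size E; rewrite !size_cat eqn_add2r => /eqP sz.
by rewrite -(take_size_cat t (erefl (size s1))) E take_size_cat.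
Qed.

Lemma last_cat_nonnil (X Y : word) : Y != [::] -> last 0 (X ++ Y) = last 0 Y.
Proof. by rewrite last_cat; case: Y. Qed.

(* The images [th c] form a suffix code, so [th] is injective on words over [A]. *)
Lemma flatten_map_inj_last (A : pred nat) (th : nat -> word) (G F : word) :
  {in A, forall c, th c != [::]} -> {in A &, injective (fun c => last 0 (th c))} ->
  all A G -> all A F -> flatten (map th G) = flatten (map th F) -> G = F.
Proof.
move=> th_nil th_inj; elim/last_ind: G F => [|G a IH] F;
  case/lastP: F => [|F b] //; rewrite ?all_rcons ?map_rcons ?flatten_rcons /=.
- move=> _ /andP [Ab _] /(congr1 size); rewrite size_cat /= => sz; exfalso.
  by move: (th_nil b Ab); rewrite -size_eq0 -lt0n /=; lia.
- move=> /andP [Aa _] _ /(congr1 size); rewrite size_cat /= => sz; exfalso.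
  by move: (th_nil a Aa); rewrite -size_eq0 -lt0n /=; lia.
move=> /andP [Aa AG] /andP [Ab AF] E.
have ab : a = b.
  apply: th_inj => //=; rewrite -(last_cat_nonnil (flatten (map th G)) (th_nil a Aa)).
  by rewrite E last_cat_nonnil ?th_nil.
by move: E; rewrite -ab => /cat_cancelr /IH ->.
Qed.

Section Embedding.
Variables (m z : nat) (l : pred nat).

Definition embeds (F : word) (k j : nat) (th : nat -> word) : Prop :=
  [/\ th z = [:: 0], forall c, c \notin F -> c != z -> th c = [::],
      {in F, forall a, l a -> th a != [::] /\ j <= last 0 (th a)},
      {in F &, forall a b, l a -> l b -> last 0 (th a) = last 0 (th b) -> a = b}
    & prefix (nseq k 0 ++ flatten (map th F)) (w_mr_from m j (count l F))].

Lemma embeds_nil (k j : nat) : k < m ->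
  embeds [::] k j (fun c => if c == z then [:: 0] else [::]).
Proof.
move=> km; split=> [|c _ /negbTE ->|//|//|]; rewrite ?eqxx //.
by rewrite /w_mr_from /= !cats0 prefix_nseq //; lia.
Qed.

Lemma embeds_cons_pow (F : word) (k j : nat) (th : nat -> word) :
  ~~ l z -> embeds F k.+1 j th -> embeds (z :: F) k j th.
Proof.
move=> lz [th_z th_out th_lin th_inj th_pre]; split=> //.
- by move=> c; rewrite inE negb_or => /andP [_]; apply: th_out.
- by move=> a; rewrite inE => /orP [/eqP ->|]; [rewrite (negbTE lz)|apply: th_lin].
- move=> a b; rewrite !inE => /orP [/eqP ->|aF] /orP [/eqP ->|bF] //;
    rewrite ?(negbTE lz) //; exact: th_inj.
by move: th_pre; rewrite -addn1 nseqD -catA /= (negbTE lz) th_z.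
Qed.

Lemma embeds_cons_linear (c : nat) (F : word) (k j : nat) (th : nat -> word) :
  l c -> c \notin F -> c != z -> k < m -> embeds F 0 j.+1 th ->
  embeds (c :: F) k j (fun x => if x == c then rcons (nseq (m - 1 - k) 0) j else th x).
Proof.
move=> lc cF cz km [th_z th_out th_lin th_inj th_pre].
have thF a : a \in F -> (if a == c then rcons (nseq (m - 1 - k) 0) j else th a) = th a.
  by move=> aF; case: eqP => // ac; move: cF; rewrite -ac aF.
split=> [|x|a|a b|]; first by rewrite eq_sym (negbTE cz).
- by rewrite inE negb_or => /andP [/negbTE -> xF]; apply: th_out.
- rewrite inE => /orP [/eqP ->|aF la]; first by rewrite eqxx last_rcons; case: (nseq _ _).
  by rewrite thF //; have [-> /ltnW] := th_lin a aF la.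
- rewrite !inE => /orP [/eqP ->|aF] /orP [/eqP ->|bF] // la lb; rewrite ?eqxx ?thF //.
  + by move=> E; have := th_lin b bF lb; rewrite -E last_rcons ltnn; case.
  + by move=> E; have := th_lin a aF la; rewrite E last_rcons ltnn; case.
  + exact: th_inj.
rewrite /= lc eqxx (eq_in_map _ th F).1 // add1n w_mr_fromS cat_rcons catA -nseqD.
rewrite subnKC; last by lia.
by rewrite prefix_catr // eqxx prefix_cons eqxx.
Qed.

Lemma exists_embedding (F : word) (k j : nat) :
  ~~ l z -> all (predU (pred1 z) l) F -> uniq (filter l F) ->
  ~~ infix (nseq m z) (nseq k z ++ F) -> exists th, embeds F k j th.
Proof.
move=> lz; elim: F k j => [|c F IH] k j.
  by move=> _ _ /ltn_of_not_infix_nseq km; eexists; apply: embeds_nil.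
move=> /= /andP [pc allF] uF no_run; have km := ltn_of_not_infix_nseq no_run.
have [cz|cz] := eqVneq c z.
  subst c; have [th emb] : exists th, embeds F k.+1 j th.
    by apply: IH => //; [move: uF; rewrite /= (negbTE lz)|rewrite -addn1 nseqD -catA].
  by exists th; apply: embeds_cons_pow.
have lc : l c by move: pc; rewrite /= (negbTE cz).
move: uF; rewrite /= lc /= mem_filter lc => /andP [cF uF].
have [th emb] : exists th, embeds F 0 j.+1 th.
  apply: IH => //; apply: contra no_run => /infix_trans; apply.
  by rewrite -cat_rcons suffix_infix.
by eexists; apply: embeds_cons_linear emb.
Qed.

Lemma embeds_inj (F : word) (k : nat) (th : nat -> word) :
  embeds F k 1 th -> (forall a, l a -> a \in F) ->
  forall G H, all (predU (pred1 z) l) G -> all (predU (pred1 z) l) H ->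
  flatten (map th G) = flatten (map th H) -> G = H.
Proof.
move=> [th_z _ th_lin th_inj _] linF G H; apply: flatten_map_inj_last.
  by move=> c /orP [/eqP ->|/[dup] /linF cF /(th_lin c cF) []]; rewrite ?th_z.
have last_pos a : l a -> 0 < last 0 (th a) by move=> /[dup] /linF aF /(th_lin a aF) [].
move=> a b /orP [/eqP ->|la] /orP [/eqP ->|lb] //=; rewrite ?th_z /=.
- by move=> E0; have := last_pos b lb; rewrite -E0.
- by move=> E0; have := last_pos a la; rewrite E0.
- by apply: th_inj; rewrite ?linF.
Qed.

End Embedding.

Definition linear (u : word) : pred nat := fun c => count_mem c u == 1.

Lemma fresh_letter (s : word) : (sumn s).+1 \notin s.
Proof.
suff le_sumn c : c \in s -> c <= sumn s by apply/negP => /le_sumn; rewrite ltnn.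
by elim: s => //= x s IH; rewrite inE => /orP [/eqP ->|/IH]; lia.
Qed.

Lemma count_nonlinear (u : word) (c : nat) : c \in u -> ~~ linear u c -> 1 < count_mem c u.
Proof. by rewrite -count_mem_gt0 /linear; case: (count_mem c u) => [|[|]]. Qed.

Definition holds_in_w_mr (m : nat) (i : identity) : Prop :=
  forall r, 0 < r -> sat (factor_monoid (w_mr m r)) i.

Lemma sat_factor_monoid_subst (w u v : word) (th : nat -> word) :
  (forall c, infix (th c) w) -> sat (factor_monoid w) (u, v) ->
  infix (flatten (map th u)) w -> flatten (map th u) = flatten (map th v).
Proof.
move=> th_w uv uw; pose s c : carrier (factor_monoid w) := insubd (fac_one w) (Some (th c)).
have val_s c : sval (s c) = Some (th c) by rewrite val_insubd /= th_w.
have eval_s x : sval (eval s x) =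
    if infix (flatten (map th x)) w then Some (flatten (map th x)) else None.
  rewrite eval_factor_monoid (eq_map (g := th)) => [|c]; last by rewrite /fac_word val_s.
  by rewrite (@eq_all _ _ predT) ?all_predT // => c; rewrite val_s.
by have := congr1 sval (uv s); rewrite !eval_s uw; case: ifP => // _ [].
Qed.

Lemma flatten_map_filter (p : pred nat) (th : nat -> word) (u : word) :
  (forall c, ~~ p c -> th c = [::]) -> flatten (map th u) = flatten (map th (filter p u)).
Proof. by move=> th0; elim: u => //= c u IH; case: (boolP (p c)) => [_|/th0 ->] /=; rewrite IH. Qed.

Lemma uniq_filter_linear (u : word) : uniq (filter (linear u) u).
Proof.
apply: count_mem_uniq => c; rewrite mem_filter; case: (boolP (linear u c)) => /= [lc|nlc].
  by rewrite count_mem_filter // (eqP lc) -count_mem_gt0 (eqP lc).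
by apply/count_memPn; rewrite mem_filter (negbTE nlc).
Qed.

Lemma infix_flatten_map (th : nat -> word) (x : word) (c : nat) :
  c \in x -> infix (th c) (flatten (map th x)).
Proof. by case/splitPr=> A B; rewrite map_cat flatten_cat /= infix_infix. Qed.

Lemma trace_eq_of_w_mr (m : nat) (u v : word) (z : nat) :
  1 < m -> holds_in_w_mr m (u, v) -> ~~ linear u z ->
  ~~ infix (nseq m z) (trace (linear u) z u) ->
  trace (linear u) z u = trace (linear u) z v.
Proof.
set l := linear u; set F := trace l z u => m1 uv lz no_run.
have uF : uniq (filter l F).
  rewrite /F /trace -filter_predI (eq_filter (a2 := l)) ?uniq_filter_linear // => c /=.
  by case: (l c); rewrite ?andbF ?orbT.
have linF a : l a -> a \in F.
  by move=> la; rewrite mem_filter /= la orbT -count_mem_gt0 (eqP la).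
have [th emb] := @exists_embedding m z l F 0 1 lz (filter_all _ _) uF no_run.
have [th_z th_out _ _ th_pre] := emb.
pose w := w_mr m (count l F).+1.
have Fw : infix (flatten (map th F)) w.
  by apply/prefixW/(prefix_trans th_pre); rewrite /w w_mrS prefix_prefix.
have th_other c : ~~ predU (pred1 z) l c -> th c = [::].
  rewrite /= negb_or => /andP [cz lc]; apply: th_out => //.
  by rewrite mem_filter /= (negbTE cz) (negbTE lc).
have th_w c : infix (th c) w.
  have [cF|cF] := boolP (c \in F); first exact: infix_trans (infix_flatten_map th cF) Fw.
  have [->|cz] := eqVneq c z; last by rewrite th_out ?infix0s.
  by rewrite th_z infix1s mem_cat mem_nseq eqxx andbT; apply/orP; left; lia.
have := sat_factor_monoid_subst th_w (uv _ (ltn0Sn _)).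
rewrite (flatten_map_filter u th_other) (flatten_map_filter v th_other) => /(_ Fw) E.
by apply: (embeds_inj emb linF); rewrite ?filter_all.
Qed.

Lemma filter_linear_eq_of_w_mr (m : nat) (u v : word) :
  1 < m -> holds_in_w_mr m (u, v) -> filter (linear u) u = filter (linear u) v.
Proof.
move=> m1 uv; have := fresh_letter (u ++ v); set z := _.+1.
rewrite mem_cat negb_or => /andP [zu zv].
(* At a letter occurring in neither word, a trace is the subword of linear letters. *)
rewrite -(trace_notin (linear u) zu) -(trace_notin (linear u) zv).
apply: (trace_eq_of_w_mr m1 uv).
  by rewrite /linear (count_memPn zu).
apply/negP => /mem_infix/(_ z); rewrite mem_nseq eqxx mem_filter andbT (negbTE zu) andbF.
by move=> /(_ (ltnW m1)).
Qed.

Lemma holds_in_w_mr_sym (m : nat) (u v : word) : holds_in_w_mr m (u, v) -> holds_in_w_mr m (v, u).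
Proof. by move=> uv r r0 s; rewrite (uv r r0 s). Qed.

Lemma linear_eq_of_w_mr (m : nat) (u v : word) :
  1 < m -> holds_in_w_mr m (u, v) -> linear u =1 linear v.
Proof.
have linear_sub x y c : 1 < m -> holds_in_w_mr m (x, y) -> linear x c -> linear y c.
  move=> m1 xy lc; rewrite /linear -(count_mem_filter y lc).
  by rewrite -(filter_linear_eq_of_w_mr m1 xy) count_mem_filter.
move=> m1 uv c; apply/idP/idP; apply: linear_sub => //; exact: holds_in_w_mr_sym.
Qed.

Lemma capped_w_mr (m : nat) (u v : word) (z : nat) : 1 < m -> holds_in_w_mr m (u, v) ->
  capped m (linear u) u z -> capped m (linear u) v z.
Proof.
move=> m1 uv /andP [lz capu]; rewrite /capped lz /=; apply: contraTT capu => capv.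
have luv := linear_eq_of_w_mr m1 uv.
have capv' : ~~ infix (nseq m z) (trace (linear v) z v) by rewrite -(eq_trace _ _ luv).
by rewrite (eq_trace _ _ luv) -(trace_eq_of_w_mr m1 (holds_in_w_mr_sym uv)) // -luv.
Qed.

Lemma sat_of_w_mr (m : nat) (M : magma) (u v : word) :
  1 < m -> E_var m M -> holds_in_w_mr m (u, v) -> sat M (u, v).
Proof.
move=> m1 EM uv s /=; set l := linear u.
pose Cs := undup [seq z <- u | capped m l u z].
have capC : {in Cs, forall z, capped m l u z} by move=> z; rewrite mem_undup mem_filter => /andP [].
have nlC : {in Cs, forall z, ~~ l z} by move=> z /capC /andP [].
have luv := linear_eq_of_w_mr m1 uv.
have cnt_u : {in u, forall c, ~~ l c -> 1 < count_mem c u} by move=> c; apply: count_nonlinear.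
have cnt_v : {in v, forall c, ~~ l c -> 1 < count_mem c v}.
  by move=> c cv; rewrite /l luv; apply: count_nonlinear.
pose P := flatten [seq nseq m z | z <- Cs].
have capCv z : z \in Cs -> capped m l v z by move/capC; apply: capped_w_mr.
rewrite [LHS](eval_capped s EM [::] (undup_uniq _) capC cnt_u).
rewrite [RHS](eval_capped s EM [::] (undup_uniq _) capCv cnt_v) /= -/P.
have := @eval_eq_of_traces _ s (E_var_O EM) l
  [seq c <- u | c \notin Cs] [seq c <- v | c \notin Cs] P [::].
rewrite !cats0; apply=> [z|c].
  rewrite !trace_filter_notin //; case: ifP => zC; first exact: filter_linear_eq_of_w_mr m1 uv.
  have [lz|lz] := boolP (l z); first by rewrite !trace_linear // (filter_linear_eq_of_w_mr m1 uv).
  apply: (trace_eq_of_w_mr m1 uv) => //; apply: contraFN zC => capz.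
  rewrite mem_undup mem_filter /capped lz capz /=.
  have /(mem_infix capz) : z \in nseq m z by rewrite mem_nseq eqxx andbT; lia.
  by rewrite mem_filter => /andP [].
rewrite mem_filter => /andP [cC cu] lc.
by rewrite count_cat count_mem_filter //; move: (cnt_u c cu lc); lia.
Qed.

Theorem lemma5p2 (m : nat) : 2 <= m ->
  forall M : magma,
    E_var m M <-> join_var (fun r : nat => 1 <= r) (fun r => factor_monoid (w_mr m r)) M.
Proof.
move=> m1 M; split=> [EM|[monoidM satJ]].
  split=> [|[u v] uv]; first by case: EM.
  by apply: sat_of_w_mr m1 EM _ => r r0; apply: uv.
by split=> // i Ei; apply: satJ => r _; apply: sat_E_w_mr.
Qed.
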